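(* Let $\mathcal{H}_1,\mathcal{H}_2$ be finite-dimensional Hilbert spaces, $m$ a positive integer, and $\mathcal{O}^{(\mathrm{CP})}_{\mathrm{F}}(\mathcal{H}_1\to\mathcal{H}_2)\subseteq\mathcal{O}^{(\mathrm{CP})}(\mathcal{H}_1\to\mathcal{H}_2)$ a set of free completely positive trace-nonincreasing maps. Let $(\mathcal{E}_i)_{i=0}^{m-1}\in\mathcal{O}^{(m)}(\mathcal{H}_1\to\mathcal{H}_2)$ be a quantum instrument. Let $\mathcal{H}_3$ be an $m$-dimensional Hilbert space with orthonormal basis $\{|i\rangle\}_{i=0}^{m-1}$, and for an instrument $(\mathcal{E}_i)_i$ define the channel $\Lambda_{(\mathcal{E}_i)_i}\in\mathcal{O}(\mathcal{H}_1\to\mathcal{H}_3\otimes\mathcal{H}_2)$ by $\Lambda_{(\mathcal{E}_i)_i}(\rho)=\sum_{i=0}^{m-1}|i\rangle\langle i|\otimes\mathcal{E}_i(\rho)$. Let \[\mathcal{O}_{\mathrm{F}}=\Big\{\Lambda_{(\mathcal{E}'_i)_i}:\ \mathcal{E}'_i\in\mathcal{O}^{(\mathrm{CP})}_{\mathrm{F}}(\mathcal{H}_1\to\mathcal{H}_2)\ \forall i,\ \textstyle\sum_{i=0}^{m-1}\mathcal{E}'_i\in\mathcal{O}(\mathcal{H}_1\to\mathcal{H}_2)\Big\}.\] Then $R_{\mathcal{O}^{(\mathrm{CP})}_{\mathrm{F}}}((\mathcal{E}_i)_i)=R_{\mathcal{O}_{\mathrm{F}}}(\Lambda_{(\mathc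al{E}_i)_i})$.
   Context: $\mathcal{O}(\mathcal{H}\to\mathcal{K})$ denotes quantum channels (CPTP maps) and $\mathcal{O}^{(\mathrm{CP})}(\mathcal{H}\to\mathcal{K})$ completely positive trace-nonincreasing maps. A quantum instrument with $m$ elements is a family $(\mathcal{E}_i)_{i=0}^{m-1}$ of maps in $\mathcal{O}^{(\mathrm{CP})}(\mathcal{H}_1\to\mathcal{H}_2)$ with $\sum_i\mathcal{E}_i\in\mathcal{O}(\mathcal{H}_1\to\mathcal{H}_2)$; the set of these is $\mathcal{O}^{(m)}(\mathcal{H}_1\to\mathcal{H}_2)$. Generalized robustness of an instrument: $R_{\mathcal{O}^{(\mathrm{CP})}_{\mathrm{F}}}((\mathcal{E}_i)_i)=\min\{s\ge0:\exists(\mathcal{G}_i)_i\in\mathcal{O}^{(m)}(\mathcal{H}_1\to\mathcal{H}_2),\ \frac{\mathcal{E}_i+s\mathcal{G}_i}{1+s}\in\mathcal{O}^{(\mathrm{CP})}_{\mathrm{F}}(\mathcal{H}_1\to\mathcal{H}_2)\ \forall i\}$. Generalized robustness of a channel $\Lambda$ with respect to a set $\mathcal{G}$ of channels from $\mathcal{H}_1$ to $\mathcal{H}_3\otimes\mathcal{H}_2$: $R_{\mathcal{G}}(\Lambda)=\min\{s\ge0:\exists\Theta\in\mathcal{O}(\mathcal{H}_1\to\mathcal{H}_3\otimes\mathcal{H}_2),\ \frac{\Lambda+s\Theta}{1+s}\in\mathcal{G}\}$. *)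

From HB Require Import structures.
From mathcomp Require Import all_boot all_order all_algebra.
From mathcomp Require Import complex mxtens.
From mathcomp Require Import all_classical all_reals ereal.
Set Implicit Arguments. Unset Strict Implicit. Unset Printing Implicit Defensive.
Import Order.TTheory GRing.Theory Num.Theory.
Local Open Scope ring_scope.

Section Quantum.
Variable R : realType.
Local Notation C := (R[i]).

Definition hadj m n (A : 'M[C]_(m, n)) : 'M[C]_(n, m) := (map_mx (@Num.conj C) A)^T.

(* positive semidefinite: <v, A v> is a nonnegative real for every vector v
   (in the partial order of C, 0 <= z means z is real and nonnegative) *)
Definition psd d (A : 'M[C]_d) : Prop :=
  forall v : 'cV[C]_d, 0 <= (hadj v *m A *m v) 0 0.

Definition linmap d1 d2 := 'M[C]_d1 -> 'M[C]_d2.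

Definition is_linear d1 d2 (f : linmap d1 d2) : Prop :=
  forall (a : C) (X Y : 'M[C]_d1), f (a *: X + Y) = a *: f X + f Y.

Definition block k d (a b : 'I_k) (X : 'M[C]_(k * d)) : 'M[C]_d :=
  \matrix_(i, j) X (mxtens_index (a, i)) (mxtens_index (b, j)).

(* (id_k (x) f)(X) for X on C^k (x) C^d1 *)
Definition ampl k d1 d2 (f : linmap d1 d2) (X : 'M[C]_(k * d1)) : 'M[C]_(k * d2) :=
  \sum_(a < k) \sum_(b < k) (delta_mx a b *t f (block a b X)).

Definition is_positive d1 d2 (f : linmap d1 d2) : Prop :=
  forall X, psd X -> psd (f X).

Definition is_CP d1 d2 (f : linmap d1 d2) : Prop :=
  forall k (X : 'M[C]_(k * d1)), psd X -> psd (ampl f X).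

Definition is_TP d1 d2 (f : linmap d1 d2) : Prop :=
  forall X, \tr (f X) = \tr X.

Definition is_TNI d1 d2 (f : linmap d1 d2) : Prop :=
  forall X, psd X -> \tr (f X) <= \tr X.

Definition channel d1 d2 (f : linmap d1 d2) : Prop :=
  [/\ is_linear f, is_CP f & is_TP f].

Definition CPTNI d1 d2 (f : linmap d1 d2) : Prop :=
  [/\ is_linear f, is_CP f & is_TNI f].

Definition sum_maps m d1 d2 (E : 'I_m -> linmap d1 d2) : linmap d1 d2 :=
  fun X => \sum_(i < m) E i X.

Definition instrument m d1 d2 (E : 'I_m -> linmap d1 d2) : Prop :=
  (forall i, CPTNI (E i)) /\ channel (sum_maps E).

Definition mixmap d1 d2 (s : R) (f g : linmap d1 d2) : linmap d1 d2 :=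
  fun X => (1 + (s%:C)%C)^-1 *: (f X + (s%:C)%C *: g X).

Definition feasible_inst m d1 d2 (Free : linmap d1 d2 -> Prop)
    (E : 'I_m -> linmap d1 d2) (s : R) : Prop :=
  0 <= s /\ exists G : 'I_m -> linmap d1 d2,
    instrument G /\ forall i, Free (mixmap s (E i) (G i)).

Definition robustness_inst m d1 d2 (Free : linmap d1 d2 -> Prop)
    (E : 'I_m -> linmap d1 d2) : \bar R :=
  ereal_inf [set (s%:E)%E | s in feasible_inst Free E].

Definition feasible_chan d1 d3 (G : linmap d1 d3 -> Prop) (L : linmap d1 d3) (s : R) : Prop :=
  0 <= s /\ exists Th : linmap d1 d3, channel Th /\ G (mixmap s L Th).

Definition robustness_chan d1 d3 (G : linmap d1 d3 -> Prop) (L : linmap d1 d3) : \bar R :=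
  ereal_inf [set (s%:E)%E | s in feasible_chan G L].

Definition Lambda m d1 d2 (E : 'I_m -> linmap d1 d2) : linmap d1 (m * d2) :=
  fun rho => \sum_(i < m) (delta_mx i i *t E i rho).

Definition free_chan m d1 d2 (Free : linmap d1 d2 -> Prop) : linmap d1 (m * d2) -> Prop :=
  fun L => exists E' : 'I_m -> linmap d1 d2,
    (forall i, Free (E' i)) /\ channel (sum_maps E') /\ L = Lambda E'.

End Quantum.

(* The two robustnesses are infima over the same set of weights s.  An
   instrument (G_i) witnessing s for (E_i) gives the channel Lambda_G witnessing
   s for Lambda_E, because Lambda and the sum over outcomes commute with mixing.
   Conversely, a channel Theta witnessing s for Lambda_E splits into the
   instrument of its diagonal blocks Theta_i = <i|Theta(.)|i>, and reading the
   i-th diagonal block of Lambda_E' = (Lambda_E + s Theta)/(1 + s) shows that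
   (E_i + s Theta_i)/(1 + s) = E'_i is free.  Complete positivity of Lambda_G and
   of the Theta_i comes from one fact: X |-> K^* f(X) K is CP whenever f is,
   since id_k (x) (K^* . K) is conjugation by 1 (x) K. *)

From HB Require Import structures.
From mathcomp Require Import all_boot all_order all_algebra.
From mathcomp Require Import complex mxtens ring.
From mathcomp Require Import all_classical all_reals ereal.
Import Order.TTheory GRing.Theory Num.Theory.
Local Open Scope ring_scope.

Lemma sum_deltaZ (S : pzRingType) (V : lmodType S) (I : finType) (i0 : I)
    (F : I -> V) :
  \sum_i (i0 == i)%:R *: F i = F i0.
Proof.
rewrite (bigD1 i0) //= eqxx scale1r big1 ?addr0 // => i.
by rewrite eq_sym => /negbTE ->; rewrite scale0r.
Qed.

Lemma tensmxDr (S : comPzRingType) m n p q (A : 'M[S]_(m, n))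
    (B1 B2 : 'M[S]_(p, q)) :
  A *t (B1 + B2) = A *t B1 + A *t B2.
Proof. by apply/matrixP => x y; rewrite !mxE mulrDr. Qed.

Lemma tensmxZr (S : comPzRingType) m n p q (A : 'M[S]_(m, n)) (c : S)
    (B : 'M[S]_(p, q)) :
  A *t (c *: B) = c *: (A *t B).
Proof. by apply/matrixP => x y; rewrite !mxE mulrCA. Qed.

Section Instruments.
Variable R : realType.
Local Notation C := (R[i]).

Lemma hadjK {m n} (A : 'M[C]_(m, n)) : hadj (hadj A) = A.
Proof. by apply/matrixP => i j; rewrite !mxE conjCK. Qed.

Lemma hadj_mul m n p (A : 'M[C]_(m, n)) (B : 'M[C]_(n, p)) :
  hadj (A *m B) = hadj B *m hadj A.
Proof. by rewrite /hadj map_mxM trmx_mul. Qed.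

Lemma hadj1 n : hadj (1%:M : 'M[C]_n) = 1%:M.
Proof. by rewrite /hadj map_mx1 trmx1. Qed.

Lemma hadj_tens m n p q (A : 'M[C]_(m, n)) (B : 'M[C]_(p, q)) :
  hadj (A *t B) = hadj A *t hadj B.
Proof. by rewrite /hadj map_mxT trmx_tens. Qed.

Lemma mxsub_conj n N (f g : 'I_n -> 'I_N) (Y : 'M[C]_N) :
  mxsub f g Y = hadj (colsub f 1%:M) *m Y *m colsub g 1%:M.
Proof.
have -> : hadj (colsub f 1%:M) = rowsub f (1%:M : 'M[C]_N).
  by apply/matrixP => i j; rewrite !mxE conjC_nat eq_sym.
by rewrite mul_rowsub_mx mul1mx -mxsub_mul mulmx1.
Qed.

Lemma psd_conj n k (K : 'M[C]_(n, k)) (M : 'M[C]_n) :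
  psd M -> psd (hadj K *m M *m K).
Proof. by move=> psdM v; have := psdM (K *m v); rewrite hadj_mul !mulmxA. Qed.

Lemma psd0 n : psd (0 : 'M[C]_n).
Proof. by move=> v; rewrite mulmx0 mul0mx mxE. Qed.

Lemma psdD n (A B : 'M[C]_n) : psd A -> psd B -> psd (A + B).
Proof. by move=> psdA psdB v; rewrite mulmxDr mulmxDl mxE addr_ge0. Qed.

Lemma psdZ n (c : C) (A : 'M[C]_n) : 0 <= c -> psd A -> psd (c *: A).
Proof. by move=> c_ge0 psdA v; rewrite -scalemxAr -scalemxAl mxE mulr_ge0. Qed.

Lemma psd_sum n (I : finType) (F : I -> 'M[C]_n) :
  (forall i, psd (F i)) -> psd (\sum_i F i).
Proof.
by move=> psdF; apply: (big_ind (fun A : 'M[C]_n => psd A)); [apply: psd0 | apply: psdD |].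
Qed.

Lemma psd_tr_ge0 n (M : 'M[C]_n) : psd M -> 0 <= \tr M.
Proof.
move=> psdM; apply: sumr_ge0 => i _; have := psdM (delta_mx i 0).
suff -> : hadj (delta_mx i 0 : 'cV[C]_n) = delta_mx 0 i by rewrite -rowE -colE !mxE.
by apply/matrixP => a b; rewrite !mxE conjC_nat andbC.
Qed.

Section Blocks.
Variables k d : nat.
Implicit Types X Y : 'M[C]_(k * d).

(* The isometry |a> (x) 1 : C^d -> C^k (x) C^d. *)
Definition block_emb (a : 'I_k) : 'M[C]_(k * d, d) :=
  colsub (fun u => mxtens_index (a, u)) 1%:M.

Lemma block_conj a b Y : block a b Y = hadj (block_emb a) *m Y *m block_emb b.
Proof. by rewrite -mxsub_conj; apply/matrixP => u v; rewrite !mxE. Qed.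

Lemma block_emb_orth a b :
  hadj (block_emb a) *m block_emb b = ((a == b)%:R)%:M.
Proof.
rewrite -[hadj _]mulmx1 -mxsub_conj.
apply/matrixP => u v; rewrite !mxE (inj_eq (can_inj (@mxtens_indexK k d))).
by rewrite xpair_eqE -mulrnA mulnb.
Qed.

Lemma blockP X Y : (forall a b, block a b X = block a b Y) -> X = Y.
Proof.
move=> eqXY; apply/matrixP => x y.
case: (mxtens_indexP x) => a u; case: (mxtens_indexP y) => b v.
by have /matrixP/(_ u v) := eqXY a b; rewrite !mxE.
Qed.

Lemma blockD a b X Y : block a b (X + Y) = block a b X + block a b Y.
Proof. by apply/matrixP => u v; rewrite !mxE. Qed.

Lemma blockZ a b (c : C) X : block a b (c *: X) = c *: block a b X.
Proof. by apply/matrixP => u v; rewrite !mxE. Qed.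

Lemma block_sum a b (I : finType) (F : I -> 'M[C]_(k * d)) :
  block a b (\sum_i F i) = \sum_i block a b (F i).
Proof.
by apply/matrixP => u v; rewrite !mxE !summxE; apply: eq_bigr => i _; rewrite mxE.
Qed.

Lemma block_tens a b (A : 'M[C]_k) (B : 'M[C]_d) : block a b (A *t B) = A a b *: B.
Proof. by apply/matrixP => u v; rewrite mxE tensmxE mxE. Qed.

Lemma tens_delta_conj a b (Y : 'M[C]_d) :
  delta_mx a b *t Y = block_emb a *m Y *m hadj (block_emb b).
Proof.
apply: blockP => a' b'; rewrite block_tens block_conj !mulmxA block_emb_orth.
rewrite -!mulmxA block_emb_orth mul_mx_scalar mul_scalar_mx scalerA mxE.
by rewrite -natrM mulnb [b == _]eq_sym.
Qed.

Lemma psd_block a Y : psd Y -> psd (block a a Y).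
Proof. by rewrite block_conj; apply: psd_conj. Qed.

Lemma tr_blocks Y : \tr Y = \sum_a \tr (block a a Y).
Proof.
rewrite /mxtrace (reindex (@mxtens_index k d)) /=; last first.
  by exists (@mxtens_unindex k d) => p; rewrite (mxtens_indexK, mxtens_unindexK).
by rewrite pair_big; apply: eq_bigr => -[a u] _; rewrite mxE.
Qed.

End Blocks.

Lemma block_ampl k d1 d2 (f : linmap R d1 d2) (X : 'M[C]_(k * d1)) a b :
  block a b (ampl f X) = f (block a b X).
Proof.
rewrite /ampl block_sum; under eq_bigr do rewrite block_sum.
under eq_bigr do under eq_bigr do rewrite block_tens mxE -mulnb natrM -scalerA.
by under eq_bigr do rewrite -scaler_sumr sum_deltaZ; rewrite sum_deltaZ.
Qed.

Lemma ampl_sum m k d1 d2 (F : 'I_m -> linmap R d1 d2) (X : 'M[C]_(k * d1)) :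
  ampl (sum_maps F) X = \sum_i ampl (F i) X.
Proof.
apply: blockP => a b; rewrite block_ampl block_sum.
by apply: eq_bigr => i _; rewrite block_ampl.
Qed.

Lemma ampl_conj k d1 d2 d3 (f : linmap R d1 d2) (K : 'M[C]_(d2, d3))
    (X : 'M[C]_(k * d1)) :
  ampl (fun Y => hadj K *m f Y *m K) X = hadj (1%:M *t K) *m ampl f X *m (1%:M *t K).
Proof.
rewrite /ampl mulmx_sumr mulmx_suml; apply: eq_bigr => a _.
rewrite mulmx_sumr mulmx_suml; apply: eq_bigr => b _.
by rewrite hadj_tens hadj1 !tensmx_mul mul1mx mulmx1.
Qed.

Lemma ampl_mix k d1 d2 (s : R) (f g : linmap R d1 d2) (X : 'M[C]_(k * d1)) :
  ampl (mixmap s f g) X = (1 + (s%:C)%C)^-1 *: (ampl f X + (s%:C)%C *: ampl g X).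
Proof. by apply: blockP => a b; rewrite block_ampl !(blockZ, blockD) !block_ampl. Qed.

Lemma CP_conj d1 d2 d3 (f : linmap R d1 d2) (K : 'M[C]_(d2, d3)) :
  is_CP f -> is_CP (fun X => hadj K *m f X *m K).
Proof. by move=> CPf k X psdX; rewrite ampl_conj; apply/psd_conj/CPf. Qed.

Lemma CP_sum m d1 d2 (F : 'I_m -> linmap R d1 d2) :
  (forall i, is_CP (F i)) -> is_CP (sum_maps F).
Proof. by move=> CPF k X psdX; rewrite ampl_sum; apply: psd_sum => i; apply: CPF. Qed.

Lemma CP_positive d1 d2 (f : linmap R d1 d2) : is_CP f -> is_positive f.
Proof.
move=> CPf X psdX; pose Y : 'M[C]_(1 * d1) := delta_mx ord0 ord0 *t X.
have psdY : psd Y.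
  by rewrite /Y tens_delta_conj -{1}(hadjK (block_emb 1 d1 ord0)); apply: psd_conj.
have <- : block ord0 ord0 Y = X by rewrite block_tens mxE scale1r.
by rewrite -block_ampl block_conj; apply/psd_conj/CPf.
Qed.

Lemma linear_conj d1 d2 d3 (f : linmap R d1 d2)
    (A : 'M[C]_(d3, d2)) (B : 'M[C]_(d2, d3)) :
  is_linear f -> is_linear (fun X => A *m f X *m B).
Proof. by move=> linf c X Y; rewrite linf mulmxDr mulmxDl -scalemxAr -scalemxAl. Qed.

Lemma linear_sum_maps m d1 d2 (F : 'I_m -> linmap R d1 d2) :
  (forall i, is_linear (F i)) -> is_linear (sum_maps F).
Proof.
move=> linF c X Y; rewrite /sum_maps scaler_sumr -big_split /=.
by apply: eq_bigr => i _; apply: linF.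
Qed.

Lemma mixmap_channel d1 d2 (s : R) (f g : linmap R d1 d2) :
  0 <= s -> channel f -> channel g -> channel (mixmap s f g).
Proof.
move=> s_ge0 [linf CPf TPf] [ling CPg TPg].
have sC_ge0 : 0 <= (s%:C)%C :> C by rewrite lecR.
have sC1_gt0 : 0 < 1 + (s%:C)%C :> C by rewrite ltr_wpDr.
split.
- move=> a X Y; rewrite /mixmap linf ling !scalerDr !scalerA.
  by rewrite addrACA; congr (_ *: _ + _ *: _ + _); ring.
- move=> k X psdX; rewrite ampl_mix.
  apply: psdZ; first by rewrite invr_ge0 ltW.
  by apply: psdD; [apply: CPf | apply: psdZ => //; apply: CPg].
- move=> X; rewrite /mixmap mxtraceZ mxtraceD mxtraceZ TPf TPg.
  by field; rewrite gt_eqF.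
Qed.

Lemma sum_maps_mix m d1 d2 (s : R) (E G : 'I_m -> linmap R d1 d2) :
  sum_maps (fun i => mixmap s (E i) (G i)) = mixmap s (sum_maps E) (sum_maps G).
Proof.
by apply: funext => X; rewrite /sum_maps /mixmap -scaler_sumr big_split /= -scaler_sumr.
Qed.

Lemma Lambda_conj m d1 d2 (G : 'I_m -> linmap R d1 d2) :
  Lambda G = sum_maps (fun i X =>
    hadj (hadj (block_emb m d2 i)) *m G i X *m hadj (block_emb m d2 i)).
Proof. by apply: funext => X; apply: eq_bigr => i _; rewrite hadjK tens_delta_conj. Qed.

Lemma block_Lambda {m d1 d2} (G : 'I_m -> linmap R d1 d2) i X :
  block i i (Lambda G X) = G i X.
Proof.
rewrite /Lambda block_sum; under eq_bigr do rewrite block_tens mxE andbb.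
by rewrite sum_deltaZ.
Qed.

Lemma Lambda_mix m d1 d2 (s : R) (E G : 'I_m -> linmap R d1 d2) :
  Lambda (fun i => mixmap s (E i) (G i)) = mixmap s (Lambda E) (Lambda G).
Proof.
apply: funext => X; rewrite /Lambda /mixmap.
under eq_bigr do rewrite tensmxZr tensmxDr tensmxZr.
by rewrite -scaler_sumr big_split /= -scaler_sumr.
Qed.

Lemma Lambda_channel m d1 d2 (G : 'I_m -> linmap R d1 d2) :
  instrument G -> channel (Lambda G).
Proof.
move=> [CPTNI_G [_ _ TP_G]]; split.
- rewrite Lambda_conj; apply: linear_sum_maps => i.
  by apply: linear_conj; case: (CPTNI_G i).
- rewrite Lambda_conj; apply: CP_sum => i.
  by apply: CP_conj; case: (CPTNI_G i).
- move=> X; rewrite tr_blocks -TP_G /sum_maps raddf_sum.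
  by apply: eq_bigr => i _; rewrite block_Lambda.
Qed.

Definition diag_blocks {m d1 d2} (Th : linmap R d1 (m * d2)) :
  'I_m -> linmap R d1 d2 :=
  fun i X => block i i (Th X).

Lemma diag_blocks_conj m d1 d2 (Th : linmap R d1 (m * d2)) i :
  diag_blocks Th i = fun X => hadj (block_emb m d2 i) *m Th X *m block_emb m d2 i.
Proof. by apply: funext => X; rewrite /diag_blocks block_conj. Qed.

Lemma diag_blocks_instrument m d1 d2 (Th : linmap R d1 (m * d2)) :
  channel Th -> instrument (diag_blocks Th).
Proof.
move=> [linTh CPTh TPTh].
have linD i : is_linear (diag_blocks Th i).
  by rewrite diag_blocks_conj; apply: linear_conj.
have CPD i : is_CP (diag_blocks Th i) by rewrite diag_blocks_conj; apply: CP_conj.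
split; last split.
- move=> i; split => // X psdX; rewrite -TPTh [leRHS]tr_blocks (bigD1 i) //= lerDl.
  by apply: sumr_ge0 => j _; apply/psd_tr_ge0/psd_block; exact: CP_positive psdX.
- exact: linear_sum_maps.
- exact: CP_sum.
- by move=> X; rewrite /sum_maps raddf_sum -TPTh [RHS]tr_blocks.
Qed.

Lemma feasible_inst_Lambda m d1 d2 (Free : linmap R d1 d2 -> Prop)
    (E : 'I_m -> linmap R d1 d2) :
  instrument E -> feasible_inst Free E = feasible_chan (free_chan Free) (Lambda E).
Proof.
move=> instE; apply: funext => s; apply: propext; split.
- move=> [s_ge0 [G [instG freeEG]]]; split => //.
  exists (Lambda G); split; first exact: Lambda_channel.
  exists (fun i => mixmap s (E i) (G i)); split => //; split; last by rewrite Lambda_mix.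
  by rewrite sum_maps_mix; apply: mixmap_channel => //; [case: instE | case: instG].
- move=> [s_ge0 [Th [chTh [E' [freeE' [chE' eqE']]]]]]; split => //.
  exists (diag_blocks Th); split; first exact: diag_blocks_instrument.
  move=> i; suff -> : mixmap s (E i) (diag_blocks Th i) = E' i by [].
  apply: funext => X; rewrite -(block_Lambda E' i X) -eqE' /mixmap blockZ blockD blockZ.
  by rewrite block_Lambda.
Qed.

End Instruments.

Theorem theorem16 (R : realType) (d1 d2 m : nat) (Hm : (0 < m)%N)
  (Free : linmap R d1 d2 -> Prop)
  (HFree : forall f, Free f -> CPTNI f)
  (E : 'I_m -> linmap R d1 d2) (HE : instrument E) :
  robustness_inst Free E = robustness_chan (@free_chan R m d1 d2 Free) (Lambda E).
Proof.
by rewrite /robustness_inst /robustness_chan feasible_inst_Lambda.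
Qed.
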